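(* Let $X$ be a pure simplicial complex, $k\ge0$, $L$ a $k$-dimensional $l$-assignment, and $(\pi_\sigma)_{\sigma\in X(k)}$ any family of permutations of $[l]$. Then $$\mathrm{dist}(L,\mathcal A_l)\le\frac1l\sum_{i=1}^l\mathrm{dist}\big((L^\sigma_{\pi_\sigma(i)})_{\sigma\in X(k)},\mathcal A\big),$$ where $\mathcal A_l$ is the set of agreeing $k$-dimensional $l$-assignments and $\mathcal A$ the set of agreeing $k$-dimensional assignments.
   Context: $X(k)$ = faces with $k+1$ elements; weights $w_X(\sigma)=|\{\tau\in X(d):\sigma\subseteq\tau\}|/(\binom{d+1}{|\sigma|}|X(d)|)$ for $d=\dim X$. A $k$-dimensional assignment is $F=(F^\sigma)_{\sigma\in X(k)}$, $F^\sigma:\sigma\to\{0,1\}$; agreeing if some $g:X(0)\to\{0,1\}$ has $g|_\sigma=F^\sigma$ for all $\sigma$; $\mathrm{dist}(F,F')=\sum_{\sigma:F^\sigma\ne F'^\sigma}w_X(\sigma)$. A $k$-dimensional $l$-assignment is $L=(L^\sigma_i)_{\sigma\in X(k),i\in[l]}$ with $L^\sigma_i:\sigma\to\{0,1\}$; $\mathrm{dist}(L,M)=\sum_\sigma w_X(\sigma)|\{i:L^\sigma_i\neq M^\sigma_i\}|/l$; $L$ is agreeing if there are $g_1,\dots,g_l:X(0)\to\{0,1\}$ and permutations $\rho_\sigma$ of $[l]$ with $L^\sigma_{\rho_\sigma(i)}=g_i|_\sigma$ for all $\sigma,i$. Distance to a set is the minimum. *)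

From HB Require Import structures.
From mathcomp Require Import all_boot all_order all_algebra all_fingroup.
Set Implicit Arguments. Unset Strict Implicit. Unset Printing Implicit Defensive.
Import Order.TTheory GRing.Theory Num.Theory.
Local Open Scope ring_scope.

Section Defs.
Variable V : finType.

Definition simplicial_complex (X : {set {set V}}) : Prop :=
  forall s t : {set V}, s \in X -> t \subset s -> t \in X.

Definition dimX (X : {set {set V}}) : nat := (\max_(s in X) #|s|).-1.

Definition faces (X : {set {set V}}) (k : nat) : {set {set V}} :=
  [set s in X | #|s| == k.+1].

Definition pure (X : {set {set V}}) : Prop :=
  forall s, s \in X -> exists2 t, t \in faces X (dimX X) & s \subset t.

Variable R : realFieldType.

Definition weight (X : {set {set V}}) (s : {set V}) : R :=
  let d := dimX X in
  (#|[set t in faces X d | s \subset t]|%:R) /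
  ('C(d.+1, #|s|)%:R * (#|faces X d|)%:R).

(* k-dimensional assignment: F sigma v = F^sigma(v) (only values for sigma in X(k), v in sigma matter) *)
Definition assignment := {ffun {set V} -> {ffun V -> bool}}.

Definition differ_at (F G : assignment) (s : {set V}) : bool :=
  [exists v in s, F s v != G s v].

Definition agreeing (X : {set {set V}}) (k : nat) (F : assignment) : bool :=
  [exists g : {ffun V -> bool},
     [forall s in faces X k, forall v in s, F s v == g v]].

Definition dist (X : {set {set V}}) (k : nat) (F G : assignment) : R :=
  \sum_(s in faces X k | differ_at F G s) weight X s.

Definition zero_assignment : assignment := [ffun _ => [ffun _ => false]].

(* dist(F, A) = minimum over agreeing assignments (the set is nonempty:
   it contains zero_assignment, which serves as the initial value). *)
Definition dist_agreeing (X : {set {set V}}) (k : nat) (F : assignment) : R :=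
  \big[Num.min/dist X k F zero_assignment]_(G : assignment | agreeing X k G) dist X k F G.

(* k-dimensional l-assignment: L i sigma v = L^sigma_i(v) *)
Definition lassignment (l : nat) := {ffun 'I_l -> assignment}.

Definition ldist (X : {set {set V}}) (k l : nat) (L M : lassignment l) : R :=
  \sum_(s in faces X k)
     weight X s * ((#|[set i : 'I_l | differ_at (L i) (M i) s]|)%:R / l%:R).

Definition lagreeing (X : {set {set V}}) (k l : nat) (L : lassignment l) : bool :=
  [exists g : {ffun 'I_l -> {ffun V -> bool}},
   exists rho : {ffun {set V} -> {perm 'I_l}},
     [forall s in faces X k, forall i : 'I_l, forall v in s,
        L (rho s i) s v == g i v]].

Definition zero_lassignment (l : nat) : lassignment l := [ffun _ => zero_assignment].

Definition ldist_agreeing (X : {set {set V}}) (k l : nat) (L : lassignment l) : R :=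
  \big[Num.min/ldist X k L (zero_lassignment l)]_(M : lassignment l | lagreeing X k M)
     ldist X k L M.

Definition slice (l : nat) (L : lassignment l) (pi : {ffun {set V} -> {perm 'I_l}}) (i : 'I_l)
  : assignment := [ffun s => L (pi s i) s].

End Defs.

From HB Require Import structures.
From mathcomp Require Import all_boot all_order all_algebra all_fingroup.
Import Order.TTheory GRing.Theory Num.Theory.
Local Open Scope ring_scope.

(* Permuting the l layers independently on every face does not change the
   number of layers on which two l-assignments differ there, so
   dist(L, M) is the average of the distances between corresponding slices.
   Picking a closest agreeing assignment G_i to each slice of L and stacking
   them, layer G_i placed at position pi_sigma(i) on sigma, gives an agreeing
   l-assignment (the permutations rho_sigma are the pi_sigma) whose distance
   to L is exactly the right-hand side. *)

Section SliceDistance.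
Context {V : finType} (R : realFieldType) {X : {set {set V}}} {k l : nat}.
Context (pi : {ffun {set V} -> {perm 'I_l}}).
Implicit Types (L M : lassignment V l).

Definition unslice (G : 'I_l -> assignment V) : lassignment V l :=
  [ffun j => [ffun s => G ((pi s)^-1%g j) s]].

Lemma slice_unslice (G : 'I_l -> assignment V) i : slice (unslice G) pi i = G i.
Proof. by apply/ffunP => s; rewrite !ffunE permK. Qed.

Lemma differ_at_slice L M i s :
  differ_at (slice L pi i) (slice M pi i) s = differ_at (L (pi s i)) (M (pi s i)) s.
Proof. by rewrite /differ_at !ffunE. Qed.

Lemma card_differ_slice L M s :
  #|[set i | differ_at (slice L pi i) (slice M pi i) s]| =
  #|[set i | differ_at (L i) (M i) s]|.
Proof.
rewrite -[RHS](card_preimset _ (@perm_inj _ (pi s))); apply: eq_card => i.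
by rewrite !inE differ_at_slice.
Qed.

Lemma ldist_slice L M :
  ldist R X k L M = l%:R^-1 * \sum_(i < l) dist R X k (slice L pi i) (slice M pi i).
Proof.
rewrite /ldist /dist big_distrr /=.
under [RHS]eq_bigr do rewrite big_mkcondr big_distrr /=.
rewrite exchange_big /=; apply: eq_bigr => s _.
rewrite -big_distrr -big_mkcond /= sumr_const -card_differ_slice cardsE.
by rewrite -[weight _ _ _ *+ _]mulr_natr [RHS]mulrCA [_^-1 * _]mulrC.
Qed.

Lemma lagreeing_unslice {G : 'I_l -> assignment V} :
  (forall i, agreeing X k (G i)) -> lagreeing X k (unslice G).
Proof.
move=> GA; have /fin_all_exists [g Gg] := fun i => elimT existsP (GA i).
apply/existsP; exists [ffun i => g i]; apply/existsP; exists pi.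
apply/forall_inP => s sX; apply/forallP => i; apply/forall_inP => v vs.
by rewrite !ffunE permK; move/forall_inP/(_ s sX)/forall_inP/(_ v vs): (Gg i).
Qed.

End SliceDistance.

Lemma agreeing_zero {V : finType} (X : {set {set V}}) k :
  agreeing X k (zero_assignment V).
Proof.
apply/existsP; exists [ffun=> false].
by apply/forall_inP => s _; apply/forall_inP => v _; rewrite !ffunE.
Qed.

Lemma dist_agreeing_attained {V : finType} (R : realFieldType)
    (X : {set {set V}}) k (F : assignment V) :
  exists2 G, agreeing X k G & dist_agreeing R X k F = dist R X k F G.
Proof.
rewrite /dist_agreeing.
case: (arg_minP (dist R X k F) (agreeing_zero X k)) => G GA Gmin.
exists G => //; apply/le_anti/andP; split; first exact: bigmin_le_cond.
by apply/bigmin_geP; split; [exact: Gmin (agreeing_zero X k) | exact: Gmin].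
Qed.

Lemma ldist_agreeing_le {V : finType} (R : realFieldType) {X : {set {set V}}} {k l}
    (L : lassignment V l) {M : lassignment V l} :
  lagreeing X k M -> ldist_agreeing R X k L <= ldist R X k L M.
Proof. exact: bigmin_le_cond. Qed.

Theorem mainTheorem6 (R : realFieldType) (V : finType) (X : {set {set V}})
  (k l : nat) (L : lassignment V l) (pi : {ffun {set V} -> {perm 'I_l}}) :
  simplicial_complex X -> pure X ->
  ldist_agreeing R X k L <=
    (l%:R)^-1 * \sum_(i < l) dist_agreeing R X k (slice L pi i).
Proof.
move=> _ _.
have /fin_all_exists2 [G GA Gdist] :=
  fun i => dist_agreeing_attained R X k (slice L pi i).
apply: le_trans (ldist_agreeing_le R L (lagreeing_unslice pi GA)) _.
rewrite (ldist_slice R pi).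
by under eq_bigr do rewrite slice_unslice -Gdist.
Qed.
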